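(* Let $n=2$ and let $(X,\mathbf h,\Lambda,\widetilde B)$ be a quantum seed with $b_{12}\neq0$, and let $X'_1$, $X'_2$ be the corresponding cluster variables of $\mu_1(X,\mathbf h,\Lambda,\widetilde B)$ and $\mu_2(X,\mathbf h,\Lambda,\widetilde B)$. Then $$\mathbb{ZP}[X_1,X'_1,X_2^{\pm1}]=\mathbb{ZP}[X_1,X'_1,X_2,X'_2]+\mathbb{ZP}[X_1,X_2^{\pm1}].$$
   Context: Notation: $[a,b]=\{a,a+1,\dots,b\}$; $[x]_+=\max(x,0)$, applied entrywise to vectors; $e_1,\dots,e_m$ is the standard basis of $\mathbb Z^m$. Fix integers $m\ge n\ge 1$. A compatible pair $(\Lambda,\widetilde B)$ consists of an $m\times n$ integer matrix $\widetilde B=(b_{kl})$ and a skew-symmetric $m\times m$ integer matrix $\Lambda$ such that $\Lambda\widetilde B=-\begin{bmatrix}D\\0\end{bmatrix}$ for some $D=\mathrm{diag}(\tilde d_1,\dots,\tilde d_n)$ with all $\tilde d_k\in\mathbb Z_{>0}$. Write $\Lambda(a,b)=a^T\Lambda b$. Fix positive integers $d_1,\dots,d_n$ such that $d_k$ divides every entry of the $k$-th column $b^k$ of $\widetilde B$; $\beta^k=\frac1{d_k}b^k$. The quantum torus $\mathcal T(\Lambda)$ is the $\mathbb Z[q^{\pm1/2}]$-algebra with basis $\{X(c)\mid c\in\mathbb Z^m\}$ and multiplication $X(c)X(d)=q^{\frac12\Lambda(c,d)}X(c+d)$; $\mathcal F$ is its skew field of fractions, $X_k=X(e_k)$. For $k\in[1,n]$,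 $\mathbf h_k=(h_{k,0},\dots,h_{k,d_k})$ with $h_{k,r}\in\mathbb Z[q^{\pm1/2}]$, $h_{k,r}=h_{k,d_k-r}$, $h_{k,0}=h_{k,d_k}=1$. A quantum seed $(X,\mathbf h,\Lambda,\widetilde B)$ consists of these data and the map $X:c\mapsto X(c)$. Its mutation in direction $i$ has cluster variables $X'_k=X_k$ for $k\ne i$ and $X'_i=\sum_{r=0}^{d_i}h_{i,r}X(r[\beta^i]_++(d_i-r)[-\beta^i]_+-e_i)$. $\mathbb{ZP}$ is the ring of Laurent polynomials in $X_{n+1},\dots,X_m$ with coefficients in $\mathbb Z[q^{\pm1/2}]$; for $Y_1,\dots,Y_s\in\mathcal F$, $\mathbb{ZP}[Y_1,\dots,Y_s]$ is the subring of $\mathcal F$ generated by $\mathbb{ZP}$ and the $Y_k$ (exponent $\pm1$ means both $Y$ and $Y^{-1}$ are adjoined). The sum of two such subrings means the set of sums of elements (an additive subgroup of $\mathcal F$). *)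

From mathcomp Require Import all_boot all_order all_algebra.
Set Implicit Arguments. Unset Strict Implicit. Unset Printing Implicit Defensive.
Import Order.TTheory GRing.Theory Num.Theory.
Local Open Scope ring_scope.

(* Rank 2 (n = 2), total number of variables m = 2 + p (so m >= n = 2).
   Index (mut k) for k : 'I_2 is the mutable variable X_{k+1};
   indices >= 2 are frozen. t stands for q^{1/2}. *)

Definition mut (p : nat) (k : 'I_2) : 'I_(2 + p) := lshift p k.

Notation expv p := 'rV[int]_(2 + p).

Definition lam (p : nat) (L : 'M[int]_(2 + p)) (c d : expv p) : int :=
  (c *m L *m d^T) 0 0.

(* Elements of Z[q^{±1/2}] are given by finite lists of terms (a, e)
   meaning a * t^e (t = q^{1/2}); they are compared via coefficients. *)
Definition LP := seq (int * int).
Definition lpcoef (l : LP) (e : int) : int := \sum_(u <- l | u.2 == e) u.1.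

(* Elements of the quantum torus T(Lambda) are given by finite lists of terms
   ((a, e), c) meaning a * t^e * X(c).  The actual element of the torus is
   its coefficient function  c, e |-> coefficient of t^e X(c)  (the basis
   {t^e X(c)} of T(Lambda) as a Z-module). *)
Definition Poly (p : nat) := seq ((int * int) * expv p).

Definition coef (p : nat) (P : Poly p) : expv p -> int -> int :=
  fun c e => \sum_(u <- P | (u.2 == c) && (u.1.2 == e)) u.1.1.

Definition padd (p : nat) (P Q : Poly p) : Poly p := P ++ Q.
Definition popp (p : nat) (P : Poly p) : Poly p :=
  [seq ((- u.1.1, u.1.2), u.2) | u <- P].
(* X(c) X(d) = q^{Lambda(c,d)/2} X(c+d) = t^{Lambda(c,d)} X(c+d) *)
Definition pmul (p : nat) (L : 'M[int]_(2 + p)) (P Q : Poly p) : Poly p :=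
  [seq ((u.1.1 * v.1.1, u.1.2 + v.1.2 + lam L u.2 v.2), u.2 + v.2)
  | u <- P, v <- Q].

Definition Xmon (p : nat) (c : expv p) : Poly p := [:: ((1, 0), c)].
Definition ev (p : nat) (i : 'I_(2 + p)) : expv p :=
  \row_j (if j == i then 1 else 0).

Inductive gen (p : nat) (L : 'M[int]_(2 + p)) (G : Poly p -> Prop)
  : Poly p -> Prop :=
| gen_base P : G P -> gen L G P
| gen_add P Q : gen L G P -> gen L G Q -> gen L G (padd P Q)
| gen_opp P : gen L G P -> gen L G (popp P)
| gen_mul P Q : gen L G P -> gen L G Q -> gen L G (pmul L P Q).

Definition InRing (p : nat) (L : 'M[int]_(2 + p)) (G : Poly p -> Prop)
  (f : expv p -> int -> int) : Prop :=
  exists P, gen L G P /\ coef P = f.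

(* ZP is additively generated by the terms a t^e X(c) with c supported on
   the frozen indices; so ZP[Y_1..Y_s] is the subring generated by these
   terms together with the Y's. *)
Definition ZPterm (p : nat) (P : Poly p) : Prop :=
  exists a e (c : expv p),
    P = [:: ((a, e), c)] /\ forall k : 'I_2, c 0 (mut p k) = 0.

Definition beta (p : nat) (B : 'M[int]_(2 + p, 2)) (d : 'I_2 -> nat)
  (k : 'I_2) (j : 'I_(2 + p)) : int := (B j k %/ (d k)%:Z)%Z.

Definition mutexp (p : nat) (B : 'M[int]_(2 + p, 2)) (d : 'I_2 -> nat)
  (k : 'I_2) (r : nat) : expv p :=
  \row_j (r%:Z * Num.max (beta B d k j) 0
          + (d k - r)%:Z * Num.max (- beta B d k j) 0
          - (if j == mut p k then 1 else 0)).

Definition Xprime (p : nat) (B : 'M[int]_(2 + p, 2)) (d : 'I_2 -> nat)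
  (h : 'I_2 -> nat -> LP) (k : 'I_2) : Poly p :=
  flatten [seq [seq ((u.1, u.2), mutexp B d k r) | u <- h k r]
          | r <- iota 0 (d k).+1].

Definition quantum_seed (p : nat) (L : 'M[int]_(2 + p)) (B : 'M[int]_(2 + p, 2))
  (d : 'I_2 -> nat) (h : 'I_2 -> nat -> LP) : Prop :=
  [/\ L^T = - L,
      exists dt : 'I_2 -> int, (forall k, 0 < dt k) /\
        L *m B = - col_mx (diag_mx (\row_k dt k)) (0 : 'M[int]_(p, 2)),
      forall k, (0 < d k)%N,
      forall k (j : 'I_(2 + p)), ((d k)%:Z %| B j k)%Z &
      forall k, [/\ forall r, (r <= d k)%N ->
                      lpcoef (h k r) = lpcoef (h k (d k - r)%N),
                    lpcoef (h k 0%N) = lpcoef [:: (1, 0)] &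
                    lpcoef (h k (d k)) = lpcoef [:: (1, 0)]]].

(* Write R = ZP[X1, X1', X2^{+-1}], S = ZP[X1, X1', X2, X2'] and T = ZP[X1, X2^{+-1}].
   S and T lie in R because X'_2 is a Laurent polynomial in X1, X2 with nonnegative
   X1-degrees.  Conversely, X(z) commutes with X'_1 up to a power of q whenever z has
   X1-degree 0, and X1 X'_1 is a combination of such monomials; hence R is spanned by the
   X'_1^b X(c) with c_1 >= 0.  These lie in S + T by induction on b and on -c_2: if
   c_1 >= 1, X1 is absorbed into X'_1 X1; if c_1 = 0 and c_2 < 0, since b_12 <> 0 exactly
   one term X(z) of X'_2 has X1-degree 0, its X2-degree is -1 and its coefficient is 1, so
   X(c) ~ X(c - z) X'_2 - X(c - z) (X'_2 - X(z)), where the second part is divisible by X1. *)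

From mathcomp Require Import all_boot all_order all_algebra.
From mathcomp Require Import zify ring.
From Stdlib Require Import FunctionalExtensionality.
Set Implicit Arguments. Unset Strict Implicit. Unset Printing Implicit Defensive.
Import Order.TTheory GRing.Theory Num.Theory.
Local Open Scope ring_scope.

(** * Term lists as elements of the quantum torus *)

Section QuantumTorus.

Variables (p : nat) (L : 'M[int]_(2 + p)).

Lemma lam0l (c : expv p) : lam L 0 c = 0.
Proof. by rewrite /lam !mul0mx mxE. Qed.

Lemma lam0r (c : expv p) : lam L c 0 = 0.
Proof. by rewrite /lam trmx0 mulmx0 mxE. Qed.

Lemma lamDl (c c' d : expv p) : lam L (c + c') d = lam L c d + lam L c' d.
Proof. by rewrite /lam !mulmxDl mxE. Qed.

Lemma lamDr (c d d' : expv p) : lam L c (d + d') = lam L c d + lam L c d'.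
Proof. by rewrite /lam linearD /= mulmxDr mxE. Qed.

Lemma lam_sum (c d : expv p) : lam L c d = \sum_i c 0 i * \sum_j L i j * d 0 j.
Proof.
rewrite /lam -mulmxA mxE; apply: eq_bigr => i _; rewrite mxE; congr (_ * _).
by apply: eq_bigr => j _; rewrite mxE.
Qed.

Lemma lam_antisym (c d : expv p) : L^T = - L -> lam L c d = - lam L d c.
Proof.
move=> skewL; rewrite /lam -[in LHS](trmxK (c *m L *m d^T)) mxE.
by rewrite !trmx_mul trmxK skewL mulNmx mulmxN mulmxA mxE.
Qed.

Definition term_mul (u v : (int * int) * expv p) : (int * int) * expv p :=
  ((u.1.1 * v.1.1, u.1.2 + v.1.2 + lam L u.2 v.2), u.2 + v.2).

Definition scal (a e : int) (P : Poly p) : Poly p :=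
  [seq ((a * u.1.1, e + u.1.2), u.2) | u <- P].

Lemma coef_cat (P Q : Poly p) c e : coef (P ++ Q) c e = coef P c e + coef Q c e.
Proof. by rewrite /coef big_cat. Qed.

Lemma coef_nil c e : coef ([::] : Poly p) c e = 0.
Proof. by rewrite /coef big_nil. Qed.

Lemma coef_perm (P Q : Poly p) : perm_eq P Q -> coef P =2 coef Q.
Proof. by move=> pPQ c e; rewrite /coef (perm_big _ pPQ). Qed.

Lemma coef_popp (P : Poly p) c e : coef (popp P) c e = - coef P c e.
Proof. by rewrite /coef /popp big_map sumrN. Qed.

Lemma coef_scal a e0 (P : Poly p) c e :
  coef (scal a e0 P) c e = a * coef P c (e - e0).
Proof.
rewrite /coef /scal big_map /= big_distrr /=; apply: eq_big => u //=.
by congr andb; apply/eqP/eqP => ?; lia.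
Qed.

Lemma coef_Xmon (z c : expv p) e :
  coef (Xmon z) c e = if (z == c) && (0 == e) then 1 else 0.
Proof. by rewrite /coef /Xmon big_cons big_nil /= addr0. Qed.

Lemma coef_pmul_r (P Q : Poly p) c e :
  coef (pmul L P Q) c e =
  \sum_(u <- P) u.1.1 * coef Q (c - u.2) (e - u.1.2 - lam L u.2 (c - u.2)).
Proof.
rewrite /coef /pmul big_mkcond big_allpairs_dep /=; apply: eq_bigr => u _.
rewrite big_distrr /= [in RHS]big_mkcond /=; apply: eq_bigr => v _.
have -> : (u.2 + v.2 == c) = (v.2 == c - u.2).
  by apply/eqP/eqP => [<-|->]; rewrite (addrC u.2) ?addrK ?subrK.
case: eqP => // <- /=.
have -> : (u.1.2 + v.1.2 + lam L u.2 v.2 == e) =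
          (v.1.2 == e - u.1.2 - lam L u.2 v.2).
  by apply/eqP/eqP => E; [rewrite -E | rewrite E]; ring.
by case: ifP.
Qed.

Lemma coef_pmul_l (P Q : Poly p) c e :
  coef (pmul L P Q) c e =
  \sum_(v <- Q) v.1.1 * coef P (c - v.2) (e - v.1.2 - lam L (c - v.2) v.2).
Proof.
rewrite /coef /pmul big_mkcond big_allpairs_dep /= exchange_big /=.
apply: eq_bigr => v _; rewrite big_distrr /= [in RHS]big_mkcond /=.
apply: eq_bigr => u _.
have -> : (u.2 + v.2 == c) = (u.2 == c - v.2).
  by apply/eqP/eqP => [<-|->]; rewrite ?addrK ?subrK.
case: eqP => // <- /=.
have -> : (u.1.2 + v.1.2 + lam L u.2 v.2 == e) =
          (u.1.2 == e - v.1.2 - lam L u.2 v.2).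
  by apply/eqP/eqP => E; [rewrite -E | rewrite E]; ring.
by case: ifP => _; rewrite ?mulr0 // mulrC.
Qed.

Lemma eq_coef_pmul (P P' Q Q' : Poly p) :
  coef P =2 coef P' -> coef Q =2 coef Q' -> coef (pmul L P Q) =2 coef (pmul L P' Q').
Proof.
move=> eP eQ c e; rewrite coef_pmul_r.
under eq_bigr => u _ do rewrite eQ.
rewrite -coef_pmul_r coef_pmul_l.
by under eq_bigr => u _ do rewrite eP; rewrite -coef_pmul_l.
Qed.

Lemma pmul_cons u (P Q : Poly p) :
  pmul L (u :: P) Q = map (term_mul u) Q ++ pmul L P Q.
Proof. by []. Qed.

Lemma pmul_seq1l u (Q : Poly p) : pmul L [:: u] Q = map (term_mul u) Q.
Proof. by rewrite pmul_cons cats0. Qed.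

Lemma pmul_seq1r (P : Poly p) v : pmul L P [:: v] = map (term_mul^~ v) P.
Proof. by elim: P => //= u P IH; rewrite pmul_cons IH. Qed.

Lemma pmul_catl (P P' Q : Poly p) :
  pmul L (P ++ P') Q = pmul L P Q ++ pmul L P' Q.
Proof. by rewrite /pmul allpairs_cat. Qed.

Lemma pmul_catr (P Q Q' : Poly p) :
  perm_eq (pmul L P (Q ++ Q')) (pmul L P Q ++ pmul L P Q').
Proof. exact/permPl/perm_allpairs_catr. Qed.

Lemma pmul0r (P : Poly p) : pmul L P [::] = [::].
Proof. by elim: P. Qed.

Lemma perm_pmulr (P Q Q' : Poly p) :
  perm_eq Q Q' -> perm_eq (pmul L P Q) (pmul L P Q').
Proof. by move=> pQ; apply: perm_allpairs. Qed.

Lemma term_mulA : associative term_mul.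
Proof.
move=> [[a e] c] [[a' e'] c'] [[a'' e''] c''].
rewrite /term_mul /= lamDl lamDr mulrA !addrA; congr (_, _, _); ring.
Qed.

Lemma pmulA : associative (pmul L).
Proof.
have map_term_mul u (Q R : Poly p) :
    pmul L (map (term_mul u) Q) R = map (term_mul u) (pmul L Q R).
  elim: Q => //= v Q IH; rewrite pmul_cons IH map_cat -map_comp.
  by congr (_ ++ _); apply: eq_map => w /=; rewrite term_mulA.
by elim=> //= u P IH Q R; rewrite pmul_cons pmul_catl IH map_term_mul.
Qed.

Lemma scal_cat a e (P Q : Poly p) : scal a e (P ++ Q) = scal a e P ++ scal a e Q.
Proof. by rewrite /scal map_cat. Qed.

Lemma scal_scal a e a' e' (P : Poly p) :
  scal a e (scal a' e' P) = scal (a * a') (e + e') P.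
Proof. by rewrite /scal -map_comp; apply: eq_map => u /=; rewrite !mulrA !addrA. Qed.

Lemma scal1 (P : Poly p) : scal 1 0 P = P.
Proof. by elim: P => //= [[[a e] c] P] ->; rewrite mul1r add0r. Qed.

Lemma popp_scal (P : Poly p) : popp P = scal (-1) 0 P.
Proof. by apply: eq_map => u; rewrite mulN1r add0r. Qed.

Lemma term_scal a e (c : expv p) : [:: ((a, e), c)] = scal a e (Xmon c).
Proof. by rewrite /scal /Xmon /= mulr1 addr0. Qed.

Lemma pmul_scall a e (P Q : Poly p) :
  pmul L (scal a e P) Q = scal a e (pmul L P Q).
Proof.
elim: P => //= u P IH; rewrite !pmul_cons IH scal_cat; congr (_ ++ _).
by rewrite /scal -map_comp; apply: eq_map => v /=; rewrite /term_mul /= mulrA !addrA.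
Qed.

Lemma pmul_scalr a e (P Q : Poly p) :
  pmul L P (scal a e Q) = scal a e (pmul L P Q).
Proof.
elim: P => //= u P IH; rewrite !pmul_cons IH scal_cat; congr (_ ++ _).
by rewrite /scal -!map_comp; apply: eq_map => v /=; rewrite /term_mul /=; congr (_, _, _); ring.
Qed.

Lemma pmul_poppl (P Q : Poly p) : pmul L (popp P) Q = popp (pmul L P Q).
Proof. by rewrite !popp_scal pmul_scall. Qed.

Lemma pmul_poppr (P Q : Poly p) : pmul L P (popp Q) = popp (pmul L P Q).
Proof. by rewrite !popp_scal pmul_scalr. Qed.

Lemma pmul1l (P : Poly p) : pmul L (Xmon 0) P = P.
Proof.
rewrite pmul_seq1l; elim: P => //= [[[a e] c] P] ->.
by rewrite /term_mul /= mul1r add0r lam0l addr0 add0r.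
Qed.

Lemma pmul1r (P : Poly p) : pmul L P (Xmon 0) = P.
Proof.
elim: P => //= [[[a e] c] P] IH; rewrite pmul_cons IH /=.
by rewrite /term_mul /= mulr1 !addr0 lam0r addr0.
Qed.

Lemma pmul_constl a e (P : Poly p) : pmul L [:: ((a, e), 0)] P = scal a e P.
Proof. by rewrite pmul_seq1l; apply: eq_map => v; rewrite /term_mul /= lam0l addr0 add0r. Qed.

Lemma pmul_Xmon (c d : expv p) :
  pmul L (Xmon c) (Xmon d) = scal 1 (lam L c d) (Xmon (c + d)).
Proof. by rewrite /pmul /Xmon /scal /= /term_mul /= mulr1 add0r addr0. Qed.

Lemma Xmon_add (c d : expv p) :
  Xmon (c + d) = scal 1 (- lam L c d) (pmul L (Xmon c) (Xmon d)).
Proof. by rewrite pmul_Xmon scal_scal mulr1 addNr scal1. Qed.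

End QuantumTorus.

Section Powers.

Variables (p : nat) (L : 'M[int]_(2 + p)) (X : Poly p).

Definition ppow (b : nat) : Poly p := iter b (fun P => pmul L P X) (Xmon 0).

Lemma ppow0 : ppow 0 = Xmon 0.
Proof. by []. Qed.

Lemma ppowS b : ppow b.+1 = pmul L (ppow b) X.
Proof. by []. Qed.

Lemma ppow_comm b : pmul L X (ppow b) = pmul L (ppow b) X.
Proof.
elim: b => [|b IH]; first by rewrite ppow0 pmul1l pmul1r.
by rewrite ppowS pmulA IH.
Qed.

Lemma ppow_skew_comm (c : expv p) K b :
  pmul L (Xmon c) X = scal 1 K (pmul L X (Xmon c)) ->
  pmul L (Xmon c) (ppow b) = scal 1 (b%:Z * K) (pmul L (ppow b) (Xmon c)).
Proof.
move=> commX; elim: b => [|b IH]; first by rewrite ppow0 pmul1l pmul1r mul0r scal1.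
rewrite ppowS pmulA IH pmul_scall -!pmulA commX pmul_scalr scal_scal pmulA.
by rewrite mulr1 intS mulrDl mul1r addrC.
Qed.

End Powers.

(** * Subrings generated by term lists *)

Section SubringMembership.

Variables (p : nat) (L : 'M[int]_(2 + p)).

(* Term lists only represent torus elements through [coef]. *)
Definition in_ring (G : Poly p -> Prop) (P : Poly p) :=
  exists2 P', gen L G P' & coef P' =2 coef P.

Definition in_sum (G1 G2 : Poly p -> Prop) (P : Poly p) :=
  exists P1 P2, [/\ in_ring G1 P1, in_ring G2 P2 & coef P =2 coef (P1 ++ P2)].

Variable G : Poly p -> Prop.

Lemma in_ring_base P : G P -> in_ring G P.
Proof. by move=> GP; exists P => //; apply: gen_base. Qed.

Lemma in_ring_coef P Q : in_ring G P -> coef P =2 coef Q -> in_ring G Q.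
Proof. by case=> P' genP' eP' ePQ; exists P' => // c e; rewrite eP' ePQ. Qed.

Lemma in_ring_cat P Q : in_ring G P -> in_ring G Q -> in_ring G (P ++ Q).
Proof.
case=> P' ? eP [Q' ? eQ]; exists (padd P' Q'); first exact: gen_add.
by move=> c e; rewrite /padd !coef_cat eP eQ.
Qed.

Lemma in_ring_popp P : in_ring G P -> in_ring G (popp P).
Proof.
case=> P' ? eP; exists (popp P'); first exact: gen_opp.
by move=> c e; rewrite !coef_popp eP.
Qed.

Lemma in_ring_mul P Q : in_ring G P -> in_ring G Q -> in_ring G (pmul L P Q).
Proof.
case=> P' ? eP [Q' ? eQ]; exists (pmul L P' Q'); first exact: gen_mul.
exact: eq_coef_pmul.
Qed.

Hypothesis ZP_G : forall P, ZPterm P -> G P.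

Lemma in_ring_const a e : in_ring G [:: ((a, e), 0)].
Proof. by apply/in_ring_base/ZP_G; exists a, e, 0; split => // k; rewrite mxE. Qed.

Lemma in_ring_ppow X b : G X -> in_ring G (ppow L X b).
Proof.
move=> GX; elim: b => [|b IH]; first exact: in_ring_const.
by rewrite ppowS; apply: in_ring_mul => //; apply: in_ring_base.
Qed.

Lemma in_ring_scal a e P : in_ring G P -> in_ring G (scal a e P).
Proof. by rewrite -(pmul_constl L); apply: in_ring_mul; apply: in_ring_const. Qed.

Lemma in_ring_nil : in_ring G [::].
Proof.
apply: (in_ring_coef (in_ring_const 0 0)) => c e.
by rewrite coef_nil /coef big_cons big_nil; case: ifP.
Qed.

Lemma in_ring_terms (W : Poly p) :
  (forall w, w \in W -> in_ring G [:: w]) -> in_ring G W.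
Proof.
elim: W => [|w W IH] GW; first exact: in_ring_nil.
rewrite -cat1s; apply: in_ring_cat; first by apply: GW; rewrite mem_head.
by apply: IH => v Wv; apply: GW; rewrite inE Wv orbT.
Qed.

Lemma in_ring_Xmon_nat (z v : expv p) (n : nat) :
  in_ring G (Xmon z) -> in_ring G (Xmon v) -> in_ring G (Xmon (z + n%:Z *: v)).
Proof.
move=> Gz Gv; elim: n => [|n IH]; first by rewrite scale0r addr0.
rewrite intS scalerDl scale1r addrCA addrC (Xmon_add L).
exact/in_ring_scal/in_ring_mul.
Qed.

Lemma gen_in_ring (G' : Poly p -> Prop) P :
  (forall Q, G' Q -> in_ring G Q) -> gen L G' P -> in_ring G P.
Proof.
move=> G'G; elim=> {P} [P | P Q _ ? _ ? | P _ ? | P Q _ ? _ ?].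
- exact: G'G.
- exact: in_ring_cat.
- exact: in_ring_popp.
- exact: in_ring_mul.
Qed.

End SubringMembership.

Section SumOfSubrings.

Variables (p : nat) (L : 'M[int]_(2 + p)) (G1 G2 : Poly p -> Prop).
Hypotheses (ZP_G1 : forall P, ZPterm P -> G1 P) (ZP_G2 : forall P, ZPterm P -> G2 P).

Local Notation in_sum := (in_sum L G1 G2).

Lemma in_sum_coef P Q : in_sum P -> coef P =2 coef Q -> in_sum Q.
Proof. by case=> P1 [P2 [? ? eP]] ePQ; exists P1, P2; split => // c e; rewrite -ePQ. Qed.

Lemma in_sum_l P : in_ring L G1 P -> in_sum P.
Proof. by exists P, [::]; split => //; [apply: in_ring_nil | move=> c e; rewrite cats0]. Qed.

Lemma in_sum_r P : in_ring L G2 P -> in_sum P.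
Proof. by exists [::], P; split => //; apply: in_ring_nil. Qed.

Lemma in_sum_cat P Q : in_sum P -> in_sum Q -> in_sum (P ++ Q).
Proof.
case=> P1 [P2 [? ? eP]] [Q1 [Q2 [? ? eQ]]].
exists (P1 ++ Q1), (P2 ++ Q2); split; try exact: in_ring_cat.
by move=> c e; rewrite !coef_cat eP eQ !coef_cat; ring.
Qed.

Lemma in_sum_scal a e P : in_sum P -> in_sum (scal a e P).
Proof.
case=> P1 [P2 [? ? eP]]; exists (scal a e P1), (scal a e P2).
by split; try exact: in_ring_scal; move=> c e'; rewrite -scal_cat !coef_scal eP.
Qed.

Lemma in_sum_mulr P X :
  in_ring L G1 X -> in_ring L G2 X -> in_sum P -> in_sum (pmul L P X).
Proof.
move=> G1X G2X [P1 [P2 [? ? eP]]]; exists (pmul L P1 X), (pmul L P2 X).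
by split; try exact: in_ring_mul; rewrite -pmul_catl; apply: eq_coef_pmul.
Qed.

Lemma in_sum_pmul_terms (A W : Poly p) :
  (forall w, w \in W -> in_sum (pmul L A (Xmon w.2))) -> in_sum (pmul L A W).
Proof.
elim: W => [|[[a e] c] W IH] AW; first by rewrite pmul0r; apply/in_sum_l/in_ring_nil.
apply: (@in_sum_coef (pmul L A [:: ((a, e), c)] ++ pmul L A W)); last first.
  by apply/coef_perm; rewrite perm_sym -cat1s pmul_catr.
apply: in_sum_cat; last by apply: IH => w Ww; apply: AW; rewrite inE Ww orbT.
by rewrite term_scal pmul_scalr; apply/in_sum_scal/(AW _ (mem_head _ _)).
Qed.

End SumOfSubrings.

(** * Exponents of the seed *)

Lemma expvD p (c z : expv p) i : (c + z) 0 i = c 0 i + z 0 i.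
Proof. by rewrite mxE. Qed.

Lemma expvB p (c z : expv p) i : (c - z) 0 i = c 0 i - z 0 i.
Proof. by rewrite !mxE. Qed.

Lemma mut_inj p : injective (mut p).
Proof. exact: lshift_inj. Qed.

Lemma mut01 p : mut p 0 != mut p 1.
Proof. by rewrite (inj_eq (@mut_inj p)). Qed.

Section MutationExponents.

Variables (p : nat) (B : 'M[int]_(2 + p, 2)) (d : 'I_2 -> nat) (h : 'I_2 -> nat -> LP).

Lemma mem_Xprime k u :
  u \in Xprime B d h k -> exists2 r, (r <= d k)%N & u.2 = mutexp B d k r.
Proof.
move/flattenP => [s /mapP [r r_in ->] /mapP [v _ ->]]; exists r => //.
by move: r_in; rewrite mem_iota add0n ltnS.
Qed.

Lemma mutexp_lin k r j : (r <= d k)%N ->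
  mutexp B d k r 0 j = mutexp B d k 0 0 j + r%:Z * beta B d k j.
Proof. by move=> le_r; rewrite !mxE subn0 -subzn //; lia. Qed.

Lemma mutexp_other k k' r : k' != k ->
  mutexp B d k r 0 (mut p k') =
  r%:Z * Num.max (beta B d k (mut p k')) 0
  + (d k - r)%:Z * Num.max (- beta B d k (mut p k')) 0.
Proof. by move=> neq_k; rewrite !mxE (inj_eq (@mut_inj p)) (negbTE neq_k) subr0. Qed.

Lemma mutexp_other_ge0 k k' r : k' != k -> 0 <= mutexp B d k r 0 (mut p k').
Proof.
by move=> neq_k; rewrite mutexp_other // addr_ge0 // mulr_ge0 // le_max lexx orbT.
Qed.

End MutationExponents.

Section Seed.

Variables (p : nat) (L : 'M[int]_(2 + p)) (B : 'M[int]_(2 + p, 2)).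
Variables (d : 'I_2 -> nat) (h : 'I_2 -> nat -> LP).
Hypothesis seed : quantum_seed L B d h.

Lemma seed_skew : L^T = - L.
Proof. by case: seed. Qed.

Lemma seed_LB : exists2 dt : 'I_2 -> int, forall k, 0 < dt k &
  forall j k, (L *m B) j k = if j == mut p k then - dt k else 0.
Proof.
case: seed => _ [dt [dt_gt0 LB]] _ _ _; exists dt => // j k.
rewrite LB mxE -[j]splitK; case: (split j) => i /=.
- rewrite col_mxEu mxE /mut (inj_eq (@lshift_inj _ _)) mxE.
  by case: (i =P k) => [->|_]; rewrite ?eqxx ?mulr1n // mulr0n oppr0.
- rewrite col_mxEd mxE oppr0; case: eqP => // /(congr1 val) /= Ek.
  by have := ltn_ord k; rewrite -Ek; lia.
Qed.

(* b^T Lambda b = 0 by skew-symmetry, while Lambda b^k = -dt_k e_k. *)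
Lemma seed_B_diag k : B (mut p k) k = 0.
Proof.
have [dt dt_gt0 LB] := seed_LB.
pose v : expv p := \row_j B j k.
have : lam L v v = 0 by have := lam_antisym v v seed_skew; lia.
rewrite lam_sum (eq_bigr (fun i => if i == mut p k then B i k * - dt k else 0)).
  by rewrite -big_mkcond big_pred1_eq; have := dt_gt0 k; nia.
move=> i _; rewrite !mxE.
have -> : \sum_j L i j * v 0 j = (L *m B) i k.
  by rewrite mxE; apply: eq_bigr => j _; rewrite mxE.
by rewrite LB; case: ifP; rewrite ?mulr0.
Qed.

Lemma seed_betaE k j : beta B d k j * (d k)%:Z = B j k.
Proof. by case: seed => _ _ _ dvdB _; rewrite /beta divzK. Qed.

Lemma seed_L_beta k i : i != mut p k -> \sum_j L i j * beta B d k j = 0.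
Proof.
move=> neq_i; have [dt _ LB] := seed_LB.
have d_gt0 : 0 < (d k)%:Z by case: seed => _ _ d_gt0 _ _; rewrite ltz_nat.
have /eqP : (\sum_j L i j * beta B d k j) * (d k)%:Z = 0.
  rewrite big_distrl /= (eq_bigr (fun j => L i j * B j k)) => [|j _].
    by move: (LB i k); rewrite mxE (negbTE neq_i).
  by rewrite -mulrA seed_betaE.
by rewrite mulf_eq0 (gt_eqF d_gt0) orbF => /eqP.
Qed.

Lemma mutexp_self k r : mutexp B d k r 0 (mut p k) = -1.
Proof.
by rewrite !mxE eqxx /beta seed_B_diag div0z oppr0 maxxx !mulr0 add0r.
Qed.

(* Lambda beta^k is supported on e_k, so for c_k = 0 the pairing does not depend on r. *)
Lemma lam_mutexp k (c : expv p) r : c 0 (mut p k) = 0 -> (r <= d k)%N ->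
  lam L c (mutexp B d k r) = lam L c (mutexp B d k 0).
Proof.
move=> ck0 le_r; rewrite !lam_sum; apply: eq_bigr => i _.
have [->|neq_i] := eqVneq i (mut p k); first by rewrite ck0 !mul0r.
under eq_bigr => j _ do rewrite (mutexp_lin _ _ le_r) mulrDr mulrCA.
by rewrite big_split /= -big_distrr /= seed_L_beta // mulr0 addr0.
Qed.

Lemma Xmon_Xprime_comm k (c : expv p) : c 0 (mut p k) = 0 ->
  pmul L (Xmon c) (Xprime B d h k) =
  scal 1 (2%:Z * lam L c (mutexp B d k 0)) (pmul L (Xprime B d h k) (Xmon c)).
Proof.
move=> ck0; rewrite pmul_seq1l pmul_seq1r /scal -map_comp.
apply/eq_in_map => u /mem_Xprime [r le_r u2E] /=.
rewrite /term_mul /= u2E mul1r mulr1 (addrC c).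
rewrite [lam L (mutexp _ _ _ _) c](lam_antisym _ _ seed_skew) (lam_mutexp ck0 le_r).
by congr (_, _, _); ring.
Qed.

End Seed.

Section Monomials.

Variables (p : nat) (L : 'M[int]_(2 + p)) (G : Poly p -> Prop).
Hypotheses (ZP_G : forall P, ZPterm P -> G P) (X1_G : G (Xmon (ev (mut p 0))))
  (X2_G : G (Xmon (ev (mut p 1)))).

Lemma in_ring_Xmon (c : expv p) :
  0 <= c 0 (mut p 0) -> 0 <= c 0 (mut p 1) \/ G (Xmon (- ev (mut p 1))) ->
  in_ring L G (Xmon c).
Proof.
move=> c1_ge0 c2_cond.
pose z : expv p := \row_j (if (j == mut p 0) || (j == mut p 1) then 0 else c 0 j).
have cE : c = z + c 0 (mut p 0) *: ev (mut p 0) + c 0 (mut p 1) *: ev (mut p 1).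
  apply/rowP => j; rewrite !mxE; have := mut01 p.
  have [->|_] := eqVneq j (mut p 0); first by rewrite /=; lia.
  by have [->|_] := eqVneq j (mut p 1); rewrite /= ?orbT; lia.
have Gz : in_ring L G (Xmon z).
  apply/in_ring_base/ZP_G; exists 1, 0, z; split => // k.
  by rewrite mxE !(inj_eq (@mut_inj p)); case: k => -[|[|]].
rewrite cE; move: (c 0 (mut p 0)) (c 0 (mut p 1)) c1_ge0 c2_cond.
move=> c1 c2 /gez0_abs <- c2_cond.
have Gz1 := in_ring_Xmon_nat ZP_G `|c1|%N Gz (in_ring_base L X1_G).
have [/gez0_abs <-|c2_lt0] := lerP 0 c2.
  by apply: (in_ring_Xmon_nat ZP_G) => //; apply: in_ring_base.
case: c2_cond => [|X2inv_G]; first by rewrite leNgt c2_lt0.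
rewrite -[c2]opprK -(ltz0_abs c2_lt0) scaleNr -scalerN.
by apply: (in_ring_Xmon_nat ZP_G) => //; apply: in_ring_base.
Qed.

Lemma in_ring_Xprime2 (B : 'M[int]_(2 + p, 2)) d h :
  G (Xmon (- ev (mut p 1))) -> in_ring L G (Xprime B d h 1).
Proof.
move=> X2inv_G; apply: (in_ring_terms ZP_G) => -[[a e] c] /mem_Xprime [r _ /= ->].
rewrite term_scal; apply/(in_ring_scal ZP_G)/in_ring_Xmon; last by right.
exact: mutexp_other_ge0.
Qed.

End Monomials.

(** * Rank two *)

Section RankTwo.

Variables (p : nat) (L : 'M[int]_(2 + p)) (B : 'M[int]_(2 + p, 2)).
Variables (d : 'I_2 -> nat) (h : 'I_2 -> nat -> LP).
Hypotheses (seed : quantum_seed L B d h) (B12_neq0 : B (mut p 0) 1 != 0).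
Implicit Types (c z : expv p) (P : Poly p).

Local Notation X1 := (Xmon (ev (mut p 0))).
Local Notation X2 := (Xmon (ev (mut p 1))).
Local Notation X2inv := (Xmon (- ev (mut p 1))).
Local Notation X1' := (Xprime B d h 0).
Local Notation X2' := (Xprime B d h 1).

Definition gens_lhs (P : Poly p) :=
  ZPterm P \/ P = X1 \/ P = X1' \/ P = X2 \/ P = X2inv.
Definition gens_cluster (P : Poly p) :=
  ZPterm P \/ P = X1 \/ P = X1' \/ P = X2 \/ P = X2'.
Definition gens_laurent (P : Poly p) :=
  ZPterm P \/ P = X1 \/ P = X2 \/ P = X2inv.

Let ZP_cluster P : ZPterm P -> gens_cluster P. Proof. by left. Qed.
Let ZP_laurent P : ZPterm P -> gens_laurent P. Proof. by left. Qed.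
Let ZP_lhs P : ZPterm P -> gens_lhs P. Proof. by left. Qed.

Local Notation in_sum := (in_sum L gens_cluster gens_laurent).

Definition X1'X (b : nat) c : Poly p := pmul L (ppow L X1' b) (Xmon c).

Lemma in_cluster_X1'X b c : 0 <= c 0 (mut p 0) -> 0 <= c 0 (mut p 1) ->
  in_ring L gens_cluster (X1'X b c).
Proof.
move=> c1_ge0 c2_ge0; apply: in_ring_mul.
  by apply: (in_ring_ppow L ZP_cluster); right; right; left.
by apply: in_ring_Xmon => //; [right; left | right; right; right; left | left].
Qed.

Lemma in_laurent_X2' : in_ring L gens_laurent X2'.
Proof. by apply: in_ring_Xprime2 => //; [right; left | right; right; left | do 3!right]. Qed.

(* X'_1 X1 has X1-degree 0, so X'_1^(b+1) X(c) = X'_1^b (X'_1 X1) X(c - e_1) drops to level b. *)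
Lemma X1'X_step b :
  (forall c, 0 <= c 0 (mut p 0) -> in_sum (X1'X b c)) ->
  forall c, 1 <= c 0 (mut p 0) -> in_sum (X1'X b.+1 c).
Proof.
move=> IHb c c1_ge1.
have -> : c = ev (mut p 0) + (c - ev (mut p 0)) by rewrite addrC subrK.
rewrite /X1'X (Xmon_add L) pmul_scalr ppowS -pmulA [pmul L X1' _]pmulA.
apply/in_sum_scal/in_sum_pmul_terms => //.
rewrite /Xmon !pmul_seq1r => w /mapP [w' /mapP [v /mem_Xprime [r _ v2E] ->] ->].
apply: IHb; rewrite /term_mul /= v2E !expvD (mutexp_self seed).
by rewrite !mxE eqxx; lia.
Qed.

(* The X_1-degree of the r-th term of X'_2 is r[beta]_+ + (d_2 - r)[-beta]_+ with
   beta = b_12/d_2 <> 0; it vanishes exactly for r = r_free, where h_{2,r} = 1. *)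
Definition r_free : nat := if 0 < beta B d 1 (mut p 0) then 0%N else d 1.
Definition z_free : expv p := mutexp B d 1 r_free.
Definition X2'_rest : Poly p := [seq u <- X2' | (u.2 : expv p) 0 (mut p 0) != 0].

Lemma r_free_le : (r_free <= d 1%R)%N.
Proof. by rewrite /r_free; case: ifP. Qed.

Lemma mutexp2_X1_eq0 r : (r <= d 1%R)%N ->
  (mutexp B d 1 r 0 (mut p 0) == 0) = (r == r_free).
Proof.
move=> le_r; set s := beta B d 1 (mut p 0).
have s_neq0 : s != 0.
  by apply: contraNneq B12_neq0 => s0; rewrite -(seed_betaE seed) -/s s0 mul0r.
rewrite mutexp_other // -/s /r_free; case: ltrP => s_sign.
  rewrite (max_idPr (_ : - s <= 0)) ?oppr_le0 ?ltW // mulr0 addr0.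
  by rewrite mulf_eq0 (negbTE s_neq0) orbF; case: r le_r.
rewrite (max_idPl (_ : 0 <= - s)) ?oppr_ge0 // mulr0 add0r.
rewrite mulf_eq0 oppr_eq0 (negbTE s_neq0) orbF.
by apply/eqP/eqP; lia.
Qed.

Lemma z_free_X1 : z_free 0 (mut p 0) = 0.
Proof. by apply/eqP; rewrite mutexp2_X1_eq0 // r_free_le. Qed.

Lemma z_free_X2 : z_free 0 (mut p 1) = -1.
Proof. exact: mutexp_self seed 1 r_free. Qed.

Lemma X2'_split : coef (Xmon z_free) =2 coef (X2' ++ popp X2'_rest).
Proof.
move=> c e; rewrite coef_cat coef_popp /X2'_rest.
set a := fun u : (int * int) * expv p => u.2 0 (mut p 0) != 0.
rewrite -(coef_perm (introT permPl (perm_filterC a X2'))) coef_cat addrAC subrr add0r.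
rewrite [in RHS]/coef big_filter_cond /Xprime big_flatten big_map.
have r_free_in : r_free \in iota 0 (d 1).+1 by rewrite mem_iota ltnS r_free_le.
rewrite (bigD1_seq _ r_free_in (iota_uniq _ _)).
rewrite [X in _ = _ + X]big1_seq ?addr0; last first.
  move=> r /andP [neq_r]; rewrite mem_iota ltnS => le_r.
  rewrite big_map big1 // => u /andP [/negPn]; rewrite /= mutexp2_X1_eq0 //.
  by rewrite (negbTE neq_r).
rewrite big_map /= -/z_free /a /= z_free_X1 eqxx /= coef_Xmon.
case: (z_free =P c) => [_|_] /=; last by rewrite big1.
have h_r_free : lpcoef (h 1 r_free) = lpcoef [:: (1, 0)].
  by case: seed => _ _ _ _ /(_ 1) [_ h0 hd]; rewrite /r_free; case: ifP.
move: (congr1 (fun f => f e) h_r_free); rewrite /lpcoef => ->.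
by rewrite big_cons big_nil /=; case: ifP; rewrite ?addr0.
Qed.

(* X(c) ~ X(c - z_free) X'_2 - X(c - z_free) X2'_rest: the first part has X2-degree one
   higher, the second positive X1-degree. *)
Lemma X1'X_step_X1free b :
  (forall c, 0 <= c 0 (mut p 0) -> in_sum (X1'X b c)) ->
  forall (k : nat) c, c 0 (mut p 0) = 0 -> - k%:Z <= c 0 (mut p 1) ->
  in_sum (X1'X b.+1 c).
Proof.
move=> IHb; elim=> [|k IHk] c c1_0 c2_ge.
  by apply/in_sum_l/in_cluster_X1'X; rewrite ?c1_0 // -oppr0.
have [c2_ge0|c2_lt0] := lerP 0 (c 0 (mut p 1)).
  by apply/in_sum_l/in_cluster_X1'X; rewrite ?c1_0.
set c' := c - z_free; set A := ppow L X1' b.+1.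
have -> : c = c' + z_free by rewrite subrK.
rewrite /X1'X (Xmon_add L) pmul_scalr; apply: in_sum_scal => //.
apply: (@in_sum_coef _ _ _ _
  (pmul L (pmul L A (Xmon c')) X2' ++ popp (pmul L A (pmul L (Xmon c') X2'_rest)))).
  apply: in_sum_cat.
    apply: in_sum_mulr; [by apply: in_ring_base; do 4!right | exact: in_laurent_X2' |].
    by apply: IHk; rewrite expvB ?z_free_X1 ?z_free_X2 ?c1_0; lia.
  rewrite popp_scal; apply/in_sum_scal/in_sum_pmul_terms => //.
  rewrite pmul_seq1l => w /mapP [u]; rewrite mem_filter => /andP [u1_neq0 /mem_Xprime [r _ u2E]].
  move=> ->; apply: (X1'X_step IHb); rewrite /= expvD expvB c1_0 z_free_X1.
  by move: u1_neq0 (mutexp_other_ge0 B d r (isT : (0 : 'I_2) != 1)); rewrite u2E; lia.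
move=> c0 e0; symmetry.
rewrite (eq_coef_pmul L (fun _ _ => erefl) (eq_coef_pmul L (fun _ _ => erefl) X2'_split)).
rewrite (coef_perm (perm_pmulr _ _ (pmul_catr _ _ _ _))) (coef_perm (pmul_catr _ _ _ _)).
by rewrite !pmul_poppr pmulA.
Qed.

Lemma X1'X_in_sum b c : 0 <= c 0 (mut p 0) -> in_sum (X1'X b c).
Proof.
elim: b c => [|b IHb] c c1_ge0.
  rewrite /X1'X ppow0 pmul1l; apply/in_sum_r/in_ring_Xmon => //.
  - by right; left.
  - by right; right; left.
  - by right; do 3!right.
have [c1_ge1|c1_lt1] := lerP 1 (c 0 (mut p 0)); first exact: X1'X_step.
apply: (X1'X_step_X1free (k := absz (c 0 (mut p 1))) IHb); first lia.
by rewrite abszE; lia.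
Qed.

(* Every element of ZP[X1, X1', X2^{+-1}] lies in this span. *)
Inductive X1'span : Poly p -> Prop :=
| X1'span_mon a e b c : 0 <= c 0 (mut p 0) -> X1'span (scal a e (X1'X b c))
| X1'span_nil : X1'span [::]
| X1'span_cat S T : X1'span S -> X1'span T -> X1'span (S ++ T)
| X1'span_perm S T : X1'span S -> perm_eq S T -> X1'span T.

Lemma X1'span_scal a e P : X1'span P -> X1'span (scal a e P).
Proof.
elim=> [a' e' b c c1 | | S T _ IHS _ IHT | S T _ IHS pST].
- by rewrite scal_scal; apply: X1'span_mon.
- exact: X1'span_nil.
- by rewrite scal_cat; apply: X1'span_cat.
- by apply: X1'span_perm IHS _; apply: perm_map.
Qed.

Lemma X1'span_in_sum P : X1'span P -> in_sum P.
Proof.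
elim=> [a e b c c1 | | S T _ IHS _ IHT | S T _ IHS pST].
- exact/in_sum_scal/X1'X_in_sum.
- exact/in_sum_l/in_ring_nil.
- exact: in_sum_cat.
- exact: in_sum_coef IHS (coef_perm pST).
Qed.

Lemma X1'span_pmull g :
  (forall b c, 0 <= c 0 (mut p 0) -> X1'span (pmul L g (X1'X b c))) ->
  forall P, X1'span P -> X1'span (pmul L g P).
Proof.
move=> gX P; elim=> [a e b c c1 | | S T _ IHS _ IHT | S T _ IHS pST].
- by rewrite pmul_scalr; apply/X1'span_scal/gX.
- by rewrite pmul0r; apply: X1'span_nil.
- by apply: X1'span_perm (X1'span_cat IHS IHT) _; rewrite perm_sym pmul_catr.
- by apply: X1'span_perm IHS _; apply: perm_pmulr.
Qed.

Lemma X1'span_X1'X b c : 0 <= c 0 (mut p 0) -> X1'span (X1'X b c).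
Proof. by move=> c1; rewrite -[X1'X b c]scal1; apply: X1'span_mon. Qed.

Lemma X1'span_Xmon1 c : 0 <= c 0 (mut p 0) -> X1'span (Xmon c).
Proof. by move/(X1'span_X1'X 0); rewrite /X1'X ppow0 pmul1l. Qed.

Lemma X1'span_Xmon z b c : z 0 (mut p 0) = 0 -> 0 <= c 0 (mut p 0) ->
  X1'span (pmul L (Xmon z) (X1'X b c)).
Proof.
move=> z1 c1; rewrite /X1'X pmulA (ppow_skew_comm _ (Xmon_Xprime_comm seed z1)).
rewrite pmul_scall -pmulA pmul_Xmon !pmul_scalr; apply/X1'span_scal/X1'span_scal.
by apply: X1'span_X1'X; rewrite expvD z1 add0r.
Qed.

Lemma X1'span_terms W b c : (forall w, w \in W -> (w.2 : expv p) 0 (mut p 0) = 0) ->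
  0 <= c 0 (mut p 0) -> X1'span (pmul L W (X1'X b c)).
Proof.
move=> W1 c1; elim: W W1 => [|[[a e] z] W IH] W1; first exact: X1'span_nil.
rewrite pmul_cons -pmul_seq1l; apply: X1'span_cat.
  rewrite term_scal pmul_scall; apply/X1'span_scal/X1'span_Xmon => //.
  exact: (W1 _ (mem_head _ _)).
by apply: IH => w Ww; apply: W1; rewrite inE Ww orbT.
Qed.

Lemma X1'span_X1 b c : 0 <= c 0 (mut p 0) -> X1'span (pmul L X1 (X1'X b c)).
Proof.
case: b => [|b] c1.
  rewrite /X1'X ppow0 pmul1l pmul_Xmon; apply/X1'span_scal/X1'span_Xmon1.
  by rewrite expvD mxE eqxx; lia.
rewrite /X1'X ppowS -ppow_comm -pmulA pmulA; apply: X1'span_terms => // w.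
rewrite pmul_seq1l => /mapP [v /mem_Xprime [r _ v2E] ->].
by rewrite /term_mul /= v2E expvD (mutexp_self seed) mxE eqxx addrN.
Qed.

Lemma X1'span_X1' b c : 0 <= c 0 (mut p 0) -> X1'span (pmul L X1' (X1'X b c)).
Proof.
by move=> c1; rewrite /X1'X pmulA ppow_comm -ppowS; apply: X1'span_X1'X.
Qed.

Lemma gen_lhs_X1'span P : gen L gens_lhs P ->
  forall Q, X1'span Q -> X1'span (pmul L P Q).
Proof.
elim=> {P} [P genP | P P' _ IH _ IH' | P _ IH | P P' _ IH _ IH'] Q spanQ.
- apply: X1'span_pmull spanQ => b c c1.
  case: genP => [[a [e [z [-> z12]]]] | [-> | [-> | [-> | ->]]]].
  + by rewrite term_scal pmul_scall; apply/X1'span_scal/X1'span_Xmon.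
  + exact: X1'span_X1.
  + exact: X1'span_X1'.
  + by apply: X1'span_Xmon; rewrite // mxE (negbTE (mut01 p)).
  + by apply: X1'span_Xmon; rewrite // !mxE (negbTE (mut01 p)) oppr0.
- by rewrite /padd pmul_catl; apply: X1'span_cat; [apply: IH | apply: IH'].
- by rewrite pmul_poppl popp_scal; apply/X1'span_scal/IH.
- by rewrite -pmulA; apply/IH/IH'.
Qed.

Lemma lhs_in_sum P : gen L gens_lhs P -> in_sum P.
Proof.
move=> genP; rewrite -(pmul1r L P); apply/X1'span_in_sum/(gen_lhs_X1'span genP).
by apply: X1'span_Xmon1; rewrite mxE.
Qed.

Lemma cluster_in_lhs P : gen L gens_cluster P -> in_ring L gens_lhs P.
Proof.
apply: gen_in_ring => Q [ZQ | [-> | [-> | [-> | ->]]]].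
- by apply: in_ring_base; left.
- by apply: in_ring_base; right; left.
- by apply: in_ring_base; do 2!right; left.
- by apply: in_ring_base; do 3!right; left.
- by apply: in_ring_Xprime2 => //; [right; left | do 3!right; left | do 4!right].
Qed.

Lemma laurent_in_lhs P : gen L gens_laurent P -> in_ring L gens_lhs P.
Proof.
apply: gen_in_ring => Q [ZQ | [-> | [-> | ->]]]; apply: in_ring_base.
- by left.
- by right; left.
- by do 3!right; left.
- by do 4!right.
Qed.

End RankTwo.

Theorem lemma4p4 (p : nat) (L : 'M[int]_(2 + p)) (B : 'M[int]_(2 + p, 2))
  (d : 'I_2 -> nat) (h : 'I_2 -> nat -> LP) :
  quantum_seed L B d h ->
  B (mut p 0) 1 != 0 ->
  let X1 := Xmon (ev (mut p 0)) in
  let X2 := Xmon (ev (mut p 1)) in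
  let X2inv := Xmon (- ev (mut p 1)) in
  let X1' := Xprime B d h 0 in
  let X2' := Xprime B d h 1 in
  forall f : expv p -> int -> int,
    InRing L (fun P => ZPterm P \/ P = X1 \/ P = X1' \/ P = X2 \/ P = X2inv) f
    <->
    exists f1 f2,
      InRing L (fun P => ZPterm P \/ P = X1 \/ P = X1' \/ P = X2 \/ P = X2') f1 /\
      InRing L (fun P => ZPterm P \/ P = X1 \/ P = X2 \/ P = X2inv) f2 /\
      f = (fun c e => f1 c e + f2 c e).
Proof.
move=> seed B12_neq0 /= f; split.
  case=> P [genP <-].
  have [P1 [P2 [[Q1 genQ1 eQ1] [Q2 genQ2 eQ2] eP]]] := lhs_in_sum seed B12_neq0 genP.
  exists (coef Q1), (coef Q2); split; [by exists Q1 | split; first by exists Q2].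
  apply: functional_extensionality => c; apply: functional_extensionality => e.
  by rewrite eP coef_cat eQ1 eQ2.
case=> f1 [f2 [[P1 [genP1 <-]] [[P2 [genP2 <-]] ->]]].
have [P genP eP] := in_ring_cat (cluster_in_lhs genP1) (laurent_in_lhs B d h genP2).
exists P; split => //.
apply: functional_extensionality => c; apply: functional_extensionality => e.
by rewrite eP coef_cat.
Qed.
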